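(* Every unital coarse topological space has a coarsening family.
   Context: A coarse space is a set $X$ with a family of subsets of $X\times X$ (entourages) such that finite unions, inverses $M^{-1}=\{(y,x):(x,y)\in M\}$ and compositions $M_1M_2=\{(x,z):\exists y,(x,y)\in M_1,(y,z)\in M_2\}$ of entourages are contained in entourages and the union of all entourages is $X\times X$. It is unital if the diagonal is contained in an entourage. $M(x)=\{y:(y,x)\in M\}$; a bounded set is one contained in some $M(x)$. A coarse topological space is a coarse space with a Hausdorff topology in which every entourage is open and every bounded set has compact closure. A good cover of $X$ is a cover by bounded sets such that each point lies in only finitely many of the sets. For good covers $\mathcal U,\mathcal V$ a coarsening map is a map $\phi\colon\mathcal U\to\mathcal V$ with $U\subseteq\phi(U)$ for all $U\in\mathcal U$. A coarsening family is a directed family $(\mathcal U_i,\phi_{ij})_{i\in I}$ of good covers with coarsening maps $\phi_{ij}\colon\mathcal U_i\to\mathcal U_j$ ($i\le j$), together with entourages $(M_i)_{i\in I}$, such that: every $U\in\mathcal U_i$ is contained in $M_i(x)$ for some $x\in X$; whenever $i<j$ and $x\in X$ there is $U\in\mathcal U_j$ with $M_i(x)\subseteq U$; every entourage is contained in $M_i$ for some $i$. *)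

From mathcomp Require Import all_boot all_classical.
From mathcomp Require Import topology.
Set Implicit Arguments. Unset Strict Implicit. Unset Printing Implicit Defensive.
Local Open Scope classical_set_scope.

Definition rel_inv {X : Type} (M : set (X * X)) : set (X * X) :=
  [set p | M (p.2, p.1)].

Definition rel_comp {X : Type} (M1 M2 : set (X * X)) : set (X * X) :=
  [set p | exists y, M1 (p.1, y) /\ M2 (y, p.2)].

Definition rel_section {X : Type} (M : set (X * X)) (x : X) : set X :=
  [set y | M (y, x)].

Definition coarse_structure {X : Type} (E : set (set (X * X))) : Prop :=
  [/\ (forall M1 M2, E M1 -> E M2 -> exists M, E M /\ M1 `|` M2 `<=` M),
      (forall M, E M -> exists N, E N /\ rel_inv M `<=` N),
      (forall M1 M2, E M1 -> E M2 -> exists N, E N /\ rel_comp M1 M2 `<=` N)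
    & (forall p : X * X, exists M, E M /\ M p)].

Definition coarse_unital {X : Type} (E : set (set (X * X))) : Prop :=
  exists M, E M /\ [set p : X * X | p.1 = p.2] `<=` M.

Definition coarse_bounded {X : Type} (E : set (set (X * X))) (B : set X) : Prop :=
  exists M x, E M /\ B `<=` rel_section M x.

Definition coarse_topological {T : topologicalType} (E : set (set (T * T))) : Prop :=
  [/\ coarse_structure E, hausdorff_space T,
      (forall M, E M -> open M)
    & (forall B, coarse_bounded E B -> compact (closure B))].

Definition good_cover {X : Type} (E : set (set (X * X))) (C : set (set X)) : Prop :=
  [/\ (forall U, C U -> coarse_bounded E U),
      (forall x, exists U, C U /\ U x)
    & (forall x, finite_set [set U | C U /\ U x])].

Definition coarsening_map {X : Type} (C D : set (set X)) (phi : set X -> set X) : Prop :=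
  forall U, C U -> D (phi U) /\ U `<=` phi U.

Definition directed_order {I : Type} (le : I -> I -> Prop) : Prop :=
  [/\ (exists i : I, True),
      (forall i, le i i),
      (forall i j k, le i j -> le j k -> le i k),
      (forall i j, le i j -> le j i -> i = j)
    & (forall i j, exists k, le i k /\ le j k)].

Definition coarsening_family {X : Type} (E : set (set (X * X))) {I : Type}
  (le : I -> I -> Prop) (Us : I -> set (set X)) (phi : I -> I -> set X -> set X)
  (Ms : I -> set (X * X)) : Prop :=
  directed_order le /\
  (forall i, good_cover E (Us i)) /\
  (forall i j, le i j -> coarsening_map (Us i) (Us j) (phi i j)) /\
  (forall i, E (Ms i)) /\
  (forall i U, Us i U -> exists x, U `<=` rel_section (Ms i) x) /\
  (forall i j x, le i j -> i <> j ->
      exists U, Us j U /\ rel_section (Ms i) x `<=` U) /\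
  (forall M, E M -> exists i, M `<=` Ms i).

From HB Require Import structures.
From mathcomp Require Import all_boot all_classical finmap.
From mathcomp Require Import topology.
Set Implicit Arguments. Unset Strict Implicit. Unset Printing Implicit Defensive.
Local Open Scope classical_set_scope.

(* Index the family by pairs of entourages (a, b) with a reflexive and
   a a a^-1 contained in b, where i < j means b_i is contained in a_j.  For such a
   pair, take a maximal set D of points that are a-separated (no two of them
   have a common a-neighbour); by maximality every point x is a-close to some
   d in D, and then a(x) lies in U_d := (a a a^-1)(d), which is contained in
   b(d).  The cover {U_d : d in D} is point-finite because the d with y in U_d
   lie in the relatively compact set b^-1(y), and a compact set meets an
   a-separated set in finitely many points: finitely many open sections a(z)
   cover it, and each contains at most one point of D. *)

Section Relations.
Variable X : Type.
Implicit Types (a M N : set (X * X)) (D : set X).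

Definition diagonal : set (X * X) := [set p | p.1 = p.2].

Definition thicken a := rel_comp a (rel_comp a (rel_inv a)).

Lemma rel_comp_subset M1 M2 N1 N2 :
  M1 `<=` N1 -> M2 `<=` N2 -> rel_comp M1 M2 `<=` rel_comp N1 N2.
Proof. by move=> h1 h2 [x z] [y [/h1 ? /h2 ?]]; exists y. Qed.

Lemma subset_thicken a : diagonal `<=` a -> a `<=` thicken a.
Proof. by move=> da [y d] ayd; exists d; split => //; exists d; split; apply: da. Qed.

Lemma rel_section_thicken a x d z :
  a (x, z) -> a (d, z) -> rel_section a x `<=` rel_section (thicken a) d.
Proof. by move=> axz adz y ayx; exists x; split => //; exists z. Qed.

Definition separated a D :=
  forall d d' z, D d -> D d' -> a (d, z) -> a (d', z) -> d = d'.

Lemma exists_maximal_separated a : diagonal `<=` a ->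
  exists D, separated a D /\
    forall x, exists d z, [/\ D d, a (x, z) & a (d, z)].
Proof.
move=> da.
have [D [sepD maxD]] : exists D, separated a D /\ forall B, D `<` B -> ~ separated a B.
  apply: Zorn_bigcup => F Fsep Ftot d d' z [A FA Ad] [B FB Bd'].
  have [AB|BA] := Ftot _ _ FA FB.
    exact: (Fsep _ FB) (AB _ Ad) Bd'.
  exact: (Fsep _ FA) Ad (BA _ Bd').
exists D; split => // x; apply: contrapT => farx.
have nDx : ~ D x by move=> Dx; apply: farx; exists x, x; split => //; apply: da.
apply: (maxD (D `|` [set x])).
  split; first by move=> y Dy; left.
  by move=> /(_ x (or_intror erefl)).
move=> d d' z [Dd|->] [Dd'|->] adz ad'z //.
- exact: sepD adz ad'z.
- by case: farx; exists d, z.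
- by case: farx; exists d', z.
Qed.

Lemma finite_set_subsingleton D :
  (forall d d', D d -> D d' -> d = d') -> finite_set D.
Proof.
move=> D1; have [[d Dd]|D0] := pselect (D !=set0).
  by apply: (@sub_finite_set _ _ [set d]) (finite_set1 d) => d' /D1; apply.
suff -> : D = set0 by exact: finite_set0.
by apply/seteqP; split => // d Dd; case: D0; exists d.
Qed.

Lemma separated_section_finite a D z : separated a D -> finite_set (D `&` rel_section a z).
Proof.
move=> sepD; apply: finite_set_subsingleton => d d' [Dd adz] [Dd' ad'z].
exact: sepD Dd Dd' adz ad'z.
Qed.

End Relations.
Arguments diagonal {X}.

Lemma coarse_thicken (X : Type) (E : set (set (X * X))) a :
  coarse_structure E -> E a -> exists b, E b /\ thicken a `<=` b.
Proof.
case=> _ Einv Ecomp _ Ea.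
have [N1 [EN1 s1]] := Einv _ Ea.
have [N2 [EN2 s2]] := Ecomp _ _ Ea EN1.
have [N3 [EN3 s3]] := Ecomp _ _ Ea EN2.
exists N3; split => //; apply: subset_trans s3; apply: rel_comp_subset => //.
exact: subset_trans (rel_comp_subset _ _) s2.
Qed.

Section Compactness.
Variable T : topologicalType.

Lemma open_rel_section (M : set (T * T)) z : open M -> open (rel_section M z).
Proof.
move=> oM; apply: (@open_comp _ _ (fun y => (y, z))) => // y _.
by apply: cvg_pair => //=; exact: cvg_cst.
Qed.

(* [compact_cover] is stated for pointed spaces; a point of [A] is enough. *)
Lemma compact_cover_compact (A : set T) : compact A -> cover_compact A.
Proof.
have [[a _] cA|A0 _ I D f _ _] := pselect (A !=set0); last first.
  by exists fset0 => // x Ax; case: A0; exists x.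
pose Tp : ptopologicalType := HB.pack_for ptopologicalType T (isPointed.Build T a).
have : @compact Tp A by exact: cA.
by rewrite compact_cover.
Qed.

Lemma separated_compact_finite (a : set (T * T)) (D K : set T) :
  open a -> diagonal `<=` a -> separated a D -> compact K -> finite_set (D `&` K).
Proof.
move=> oa da sepD /compact_cover_compact cK.
have [Z _ KZ] := cK T K (rel_section a) (fun z _ => open_rel_section z oa)
  (fun z Kz => ex_intro2 _ _ z Kz (da (z, z) erefl)).
apply: (@sub_finite_set _ _ (\bigcup_(z in [set` Z]) (D `&` rel_section a z))).
  by move=> d [Dd /KZ [z Zz azd]]; exists z.
apply: bigcup_finite; first exact: finite_fset.
by move=> z _; exact: separated_section_finite.
Qed.

End Compactness.

Definition adapted_cover (X : Type) (E : set (set (X * X))) (a b : set (X * X))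
    (C : set (set X)) :=
  [/\ good_cover E C,
    forall U, C U -> exists y, U `<=` rel_section b y
    & forall x, exists U, C U /\ rel_section a x `<=` U].

Lemma exists_good_cover (T : topologicalType) (E : set (set (T * T)))
    (a b : set (T * T)) :
  coarse_topological E -> E a -> diagonal `<=` a -> thicken a `<=` b -> E b ->
  exists C, adapted_cover E a b C.
Proof.
move=> [coarse_str _ Eopen Ecompact] Ea da ab Eb.
have [D [sepD nearD]] := exists_maximal_separated da.
pose C := [set U | exists2 d, D d & U = rel_section (thicken a) d].
have C_refines U : C U -> exists y, U `<=` rel_section b y.
  by move=> [d _ ->]; exists d => y; exact: ab.
have C_absorbs x : exists U, C U /\ rel_section a x `<=` U.
  have [d [z [Dd axz adz]]] := nearD x.
  by exists (rel_section (thicken a) d); split; [exists d | exact: rel_section_thicken axz adz].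
exists C; split => //; split.
- by move=> U /C_refines [y Uy]; exists b, y; split.
- move=> x; have [U [CU aU]] := C_absorbs x.
  by exists U; split => //; apply: aU; exact: da.
- move=> y; have [_ Einv _ _] := coarse_str.
  have [N [EN bN]] := Einv _ Eb.
  have K_compact : compact (closure (rel_section N y)).
    by apply: Ecompact; exists N, y; split.
  have DK_finite := separated_compact_finite (Eopen _ Ea) da sepD K_compact.
  apply: sub_finite_set (finite_image (rel_section (thicken a)) DK_finite).
  move=> U [[d Dd ->] yU]; exists d => //; split => //.
  by apply: subset_closure; apply: bN; exact: ab.
Qed.

Lemma exists_coarsening_map (X : Type) (C D : set (set X)) :
  (forall U, C U -> exists V, D V /\ U `<=` V) -> exists phi, coarsening_map C D phi.
Proof.
move=> CD; have /choice [phi Hphi] : forall U, exists V, C U -> D V /\ U `<=` V.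
  move=> U; have [CU|nCU] := pselect (C U); last by exists U.
  by have [V DV] := CD U CU; exists V.
by exists phi.
Qed.

Section Scales.
Variables (X : Type) (E : set (set (X * X))).

Definition scale (p : set (X * X) * set (X * X)) :=
  [/\ E p.1, E p.2, diagonal `<=` p.1 & thicken p.1 `<=` p.2].

Definition scale_index := {p | scale p}.

Definition scale_inner (i : scale_index) := (sval i).1.
Definition scale_outer (i : scale_index) := (sval i).2.

Definition scale_le (i j : scale_index) := i = j \/ scale_outer i `<=` scale_inner j.

Lemma scale_inner_outer i : scale_inner i `<=` scale_outer i.
Proof.
rewrite /scale_inner /scale_outer; case: i => -[a b] [_ _ da ab] /=.
exact: subset_trans (subset_thicken da) ab.
Qed.

Lemma entourage_scale_outer i : E (scale_outer i).
Proof. by rewrite /scale_outer; case: i => -[a b] []. Qed.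

Hypotheses (coarseE : coarse_structure E) (unitalE : coarse_unital E).

Lemma scale_above M : E M -> exists i, M `<=` scale_inner i.
Proof.
move=> EM; have [D0 [ED0 dD0]] := unitalE; have [EU _ _ _] := coarseE.
have [a [Ea MD0a]] := EU _ _ EM ED0.
have [b [Eb ab]] := coarse_thicken coarseE Ea.
have da : diagonal `<=` a by move=> p dp; apply: MD0a; right; exact: dD0.
by exists (exist scale (a, b) (And4 Ea Eb da ab)) => p Mp; apply: MD0a; left.
Qed.

Lemma scale_le_directed : directed_order scale_le.
Proof.
have [D0 [ED0 _]] := unitalE; have [EU _ _ _] := coarseE.
split.
- by have [i _] := scale_above ED0; exists i.
- by move=> i; left.
- move=> i j k [-> //|ij] [<-|jk]; right => //.
  exact: subset_trans ij (subset_trans (@scale_inner_outer j) jk).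
- move=> i j [//|ij] [//|ji].
  have ai := @scale_inner_outer i; have aj := @scale_inner_outer j.
  move: i j ij ji ai aj => [[a1 b1] ?] [[a2 b2] ?].
  rewrite /scale_inner /scale_outer /= => b1a2 b2a1 a1b1 a2b2.
  apply: eq_exist; congr pair; apply/seteqP; split.
  + exact: subset_trans a1b1 b1a2.
  + exact: subset_trans a2b2 b2a1.
  + exact: subset_trans b1a2 a2b2.
  + exact: subset_trans b2a1 a1b1.
- move=> i j; have [M [EM ijM]] := EU _ _ (@entourage_scale_outer i) (@entourage_scale_outer j).
  have [k Mk] := scale_above EM.
  by exists k; split; right; apply: subset_trans Mk => p ?; apply: ijM; [left|right].
Qed.

End Scales.

Lemma exists_scale_covers (T : topologicalType) (E : set (set (T * T))) :
  coarse_topological E ->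
  exists Us : scale_index E -> set (set T),
    forall i, adapted_cover E (scale_inner i) (scale_outer i) (Us i).
Proof.
move=> coarseE.
suff /choice [Us HUs] : forall i : scale_index E, exists C,
    adapted_cover E (scale_inner i) (scale_outer i) C by exists Us.
by move=> -[[a b] [Ea Eb da ab]]; exact: exists_good_cover coarseE Ea da ab Eb.
Qed.

Lemma exists_scale_coarsening_maps (T : Type) (E : set (set (T * T)))
    (Us : scale_index E -> set (set T)) :
  (forall i, adapted_cover E (scale_inner i) (scale_outer i) (Us i)) ->
  exists phi, forall i j, scale_le i j -> coarsening_map (Us i) (Us j) (phi i j).
Proof.
move=> adaptedUs.
have refines i j : scale_le i j -> forall U, Us i U -> exists V, Us j V /\ U `<=` V.
  move=> [<-|ij] U UiU; first by exists U; split.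
  have [_ refines _] := adaptedUs i; have [_ _ absorbs] := adaptedUs j.
  have [y Uy] := refines U UiU; have [V [UjV aV]] := absorbs y.
  by exists V; split => // z /Uy /ij /aV.
suff /choice [phi Hphi] : forall ij : scale_index E * scale_index E,
    exists f, scale_le ij.1 ij.2 -> coarsening_map (Us ij.1) (Us ij.2) f.
  by exists (fun i j => phi (i, j)) => i j /(Hphi (i, j)).
move=> [i j] /=; have [le_ij|nle_ij] := pselect (scale_le i j); last by exists id => /nle_ij.
by have [f ?] := exists_coarsening_map (refines i j le_ij); exists f.
Qed.

Theorem mainTheorem6 (T : topologicalType) (E : set (set (T * T))) :
  coarse_topological E -> coarse_unital E ->
  exists (I : Type) (le : I -> I -> Prop) (Us : I -> set (set T))
         (phi : I -> I -> set T -> set T) (Ms : I -> set (T * T)),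
    coarsening_family E le Us phi Ms.
Proof.
move=> coarseE unitalE; have [coarse_str _ _ _] := coarseE.
have [Us adaptedUs] := exists_scale_covers coarseE.
have [phi phi_coarsening] := exists_scale_coarsening_maps adaptedUs.
exists (scale_index E), (@scale_le _ E), Us, phi, (@scale_outer _ E).
split; first exact: scale_le_directed.
split; first by move=> i; have [] := adaptedUs i.
split; first exact: phi_coarsening.
split; first exact: entourage_scale_outer.
split; first by move=> i; have [] := adaptedUs i.
split.
  move=> i j x [-> /(_ erefl) []|ij _]; have [_ _ absorbs] := adaptedUs j.
  by have [V [UjV aV]] := absorbs x; exists V; split => // y /ij /aV.
move=> M /(scale_above coarse_str unitalE) [i Mi].
by exists i; exact: subset_trans Mi (@scale_inner_outer _ _ i).
Qed.
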